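(* Let $x\in\mathbb{R}_{\mathrm{alg}}^\times$ and $p\in\mathcal{P}_{KZ}$ with $p\notin\mathbb{R}_{\mathrm{alg}}$. Then $\deg(xp)=\deg(p)$.
   Context: $\mathbb{R}_{\mathrm{alg}}=\mathbb{R}\cap\overline{\mathbb{Q}}$. Semialgebraic subsets of $\mathbb{R}^n$ are finite unions of finite intersections of sets $\{f=0\}$, $\{g>0\}$ with $f,g\in\mathbb{R}_{\mathrm{alg}}[T_1,\dots,T_n]$; $\mathcal{SA}^n$ denotes those with nonempty interior. A period is a real number $\int_X (P/Q)(x)\,dx$ (absolutely convergent) with $X\in\mathcal{SA}^n$, $P,Q\in\mathbb{R}_{\mathrm{alg}}[T_1,\dots,T_n]$, $Q$ not identically zero on $X$; $\mathcal{P}_{KZ}$ is the set of periods (it is an $\mathbb{R}_{\mathrm{alg}}$-algebra). For a nonzero period $p$ there exists a positive integer $k$ and a compact $K\in\mathcal{SA}^k$ with $|p|=\mathrm{vol}_k(K)$; $\deg(p)$ is the smallest such $k$, and $\deg(0)=0$. *)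

From HB Require Import structures.
From mathcomp Require Import all_boot all_order all_algebra.
From mathcomp Require Import all_classical all_reals all_analysis.
Import Order.TTheory GRing.Theory Num.Theory.
Import numFieldNormedType.Exports.
Set Implicit Arguments.
Unset Strict Implicit.
Unset Printing Implicit Defensive.
Local Open Scope classical_set_scope.
Local Open Scope ring_scope.

Record mspace (R : realType) (n : nat) := MSpace {
  ms_disp : measure_display;
  ms_type : measurableType ms_disp;
  ms_meas : {measure set ms_type -> \bar R};
  ms_coord : ms_type -> 'rV[R]_n.+1 }.

Fixpoint lebspace (R : realType) (n : nat) : mspace R n :=
  match n with
  | 0 => @MSpace R 0 _ (measurableTypeR R) (@lebesgue_measure R) (fun x => \row_(i < 1) x)
  | k.+1 => let: MSpace d T m f := lebspace R k in
      @MSpace R k.+1 _ (T * measurableTypeR R)%type (m \x (@lebesgue_measure R))%E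
        (fun tx => \row_(i < k.+2) match unlift ord_max i with
                                 | Some j => f tx.1 0 j | None => tx.2 end)
  end.

Definition leb_vol (R : realType) (n : nat) (A : set 'rV[R]_n.+1) : \bar R :=
  let: MSpace _ _ m f := lebspace R n in m (f @^-1` A).

Definition leb_integrable (R : realType) (n : nat) (X : set 'rV[R]_n.+1)
    (g : 'rV[R]_n.+1 -> R) : Prop :=
  let: MSpace _ _ m f := lebspace R n in
  m.-integrable (f @^-1` X) (fun t => (g (f t))%:E).

Definition leb_integral (R : realType) (n : nat) (X : set 'rV[R]_n.+1)
    (g : 'rV[R]_n.+1 -> R) : \bar R :=
  let: MSpace _ _ m f := lebspace R n in
  (\int[m]_(t in f @^-1` X) (g (f t))%:E)%E.

Definition is_alg (R : realType) (x : R) : Prop :=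
  exists q : {poly rat}, q != 0 /\ root (map_poly ratr q) x.

Inductive alg_polyfun (R : realType) (n : nat) : ('rV[R]_n -> R) -> Prop :=
  | apf_const (c : R) : is_alg c -> alg_polyfun (fun _ => c)
  | apf_coord (i : 'I_n) : alg_polyfun (fun x => x 0 i)
  | apf_add f g : alg_polyfun f -> alg_polyfun g -> alg_polyfun (fun x => f x + g x)
  | apf_mul f g : alg_polyfun f -> alg_polyfun g -> alg_polyfun (fun x => f x * g x).

Inductive semialg (R : realType) (n : nat) : set 'rV[R]_n -> Prop :=
  | sa_eq f : alg_polyfun f -> semialg [set x | f x = 0]
  | sa_gt g : alg_polyfun g -> semialg [set x | 0 < g x]
  | sa_union A B : semialg A -> semialg B -> semialg (A `|` B)
  | sa_inter A B : semialg A -> semialg B -> semialg (A `&` B).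


Definition SA (R : realType) (n : nat) (A : set 'rV[R]_n) : Prop :=
  semialg A /\ (interior A) !=set0.

Definition is_period (R : realType) (p : R) : Prop :=
  exists (n : nat) (X : set 'rV[R]_n.+1) (P Q : 'rV[R]_n.+1 -> R),
    [/\ SA X, alg_polyfun P, alg_polyfun Q &
        (exists2 x, X x & Q x != 0)] /\
        leb_integrable X (fun x => P x / Q x) /\
        p%:E = leb_integral X (fun x => P x / Q x).

Definition vol_repr (R : realType) (p : R) (k : nat) : Prop :=
  match k with
  | 0 => False
  | j.+1 => exists K : set 'rV[R]_j.+1,
      [/\ SA K, compact K & (`|p|)%:E = leb_vol K]
  end.

Definition deg (R : realType) (p : R) : nat :=
  if p == 0 then 0%N
  else xget 0%N [set k | vol_repr p k /\ (forall k', vol_repr p k' -> (k <= k')%N)].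

From HB Require Import structures.
From mathcomp Require Import all_boot all_order all_algebra.
From mathcomp Require Import all_classical all_reals all_analysis.
Import Order.TTheory GRing.Theory Num.Theory.
Import numFieldNormedType.Exports.
Set Implicit Arguments.
Unset Strict Implicit.
Unset Printing Implicit Defensive.
Local Open Scope ring_scope.
Local Open Scope classical_set_scope.

(* Stretching the last coordinate of R^k by an algebraic factor c > 0 preserves
   compactness, semialgebraicity (with algebraic coefficients, as c^-1 is
   algebraic too) and nonempty interior, and multiplies the k-volume by c: the
   volume is an iterated product measure, so this reduces to the dilation
   behaviour of the one-dimensional Lebesgue measure on every section.  Hence
   |p| is the k-volume of such a set iff |x p| is, for every k, and the minimal
   k agree. *)

Section LebesgueDilation.
Context {R : realType}.

Lemma preimage_mulr_itv_oc (r a b : R) : 0 < r ->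
  (fun s : R => (r * s)%R) @^-1` `]a, b] = `]a / r, b / r].
Proof.
move=> r0; apply/seteqP; split => s /=;
  by rewrite !in_itv /= ltr_pdivrMr // ler_pdivlMr // ![s * r]mulrC.
Qed.

Lemma wlength_itv_oc_divr (r a b : R) : 0 < r ->
  wlength idfun (`]a / r, b / r] : set (ocitv_type R)) =
  (r^-1%:E * wlength idfun (`]a, b] : set (ocitv_type R)))%E.
Proof.
move=> r0; have [ab|ba] := leP a b.
  rewrite !wlength_itv_bnd //; last by rewrite ler_pM2r ?invr_gt0.
  by rewrite -EFinM /= mulrBr ![r^-1 * _]mulrC.
rewrite !set_itv_ge ?wlength0 ?mule0 //= -leNgt ?ltW //.
by rewrite bnd_simp ltr_pM2r ?invr_gt0.
Qed.

Lemma lebesgue_measure_preimage_mulr_le (r : R) (A : set R) : 0 < r ->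
  (lebesgue_measure ((fun s : R => (r * s)%R) @^-1` A)
    <= r^-1%:E * lebesgue_measure A)%E.
Proof.
move=> r0; rewrite /lebesgue_measure /lebesgue_stieltjes_measure.
rewrite /measure_extension /= /mu_ext -ereal_inf_pZl ?invr_gt0 //.
apply: ereal_inf_le_tmp => _ [_ [F [mF AF] <-] <-].
exists (fun k => (fun s : R => (r * s)%R) @^-1` F k).
  split=> [i|s /AF [k _ Fk]]; last by exists k.
  have [[a b] _ /= <-] := mF i.
  by rewrite preimage_mulr_itv_oc //; exists (a / r, b / r).
rewrite -nneseriesZl => [|i _]; last exact: wlength_ge0.
apply: eq_eseriesr => i _; have [[a b] _ /= <-] := mF i.
by rewrite preimage_mulr_itv_oc // wlength_itv_oc_divr.
Qed.

Lemma lebesgue_measure_preimage_mulr (r : R) (A : set R) : 0 < r ->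
  lebesgue_measure ((fun s : R => (r * s)%R) @^-1` A)
    = (r^-1%:E * lebesgue_measure A)%E.
Proof.
move=> r0; apply/le_anti; rewrite lebesgue_measure_preimage_mulr_le //=.
have r1_gt0 : 0 < r^-1 by rewrite invr_gt0.
have := lebesgue_measure_preimage_mulr_le
  ((fun s : R => (r * s)%R) @^-1` A) r1_gt0.
have -> : (fun s : R => r^-1 * s) @^-1` ((fun s : R => (r * s)%R) @^-1` A) = A.
  by apply/funext => s /=; rewrite mulVKf // gt_eqF.
rewrite invrK => le_rA.
have r1_ge0 : (0 <= r^-1%:E)%E by rewrite lee_fin ltW.
apply: le_trans (lee_wpmul2l r1_ge0 le_rA) _.
by rewrite muleA -EFinM mulVf ?gt_eqF // mul1e.
Qed.

End LebesgueDilation.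

Section NonnegIntegralScale.
Context d (T : measurableType d) (R : realType).
Variable mu : {measure set T -> \bar R}.
Local Open Scope ereal_scope.
Import HBNNSimple.

(* No measurability assumption: both sides are suprema of integrals of simple
   functions, and scaling by [r > 0] is a bijection on simple functions. *)
Lemma ge0_integralZl_gt0 (h : T -> \bar R) (r : R) : (0 < r)%R ->
  (forall x, 0 <= h x) -> \int[mu]_x (r%:E * h x) = r%:E * \int[mu]_x h x.
Proof.
move=> r0 h0; have r_ge0 := ltW r0.
have r1_ge0 : (0 <= r^-1)%R by rewrite invr_ge0.
rewrite !ge0_integralTE // => [|x]; last by rewrite mule_ge0.
rewrite /= -ereal_sup_pZl //; congr ereal_sup; apply/seteqP; split.
- move=> _ [g /= le_gh <-]; exists (sintegral mu (scale_nnsfun g r1_ge0)).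
    exists (scale_nnsfun g r1_ge0) => //= x.
    have := lee_wpmul2l (r1_ge0 : 0 <= r^-1%:E) (le_gh x).
    by rewrite muleA -!EFinM mulVf ?gt_eqF // mul1e.
  rewrite (_ : sintegral _ _ = sintegral mu (cst r^-1 \* g)%R) //.
  by rewrite sintegralrM muleA -EFinM divff ?gt_eqF // mul1e.
- move=> _ [_ [g /= le_gh <-] <-]; exists (scale_nnsfun g r_ge0).
    by move=> x /=; rewrite EFinM lee_wpmul2l.
  by rewrite (_ : sintegral _ _ = sintegral mu (cst r \* g)%R) // sintegralrM.
Qed.

End NonnegIntegralScale.

Section StretchLast.
Context {R : realType} {n : nat}.

Definition stretch_last (r : R) (y : 'rV[R]_n.+1) : 'rV[R]_n.+1 :=
  \row_i (if i == ord_max then r * y 0 i else y 0 i).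

Lemma stretch_lastM (r s : R) (y : 'rV[R]_n.+1) :
  stretch_last r (stretch_last s y) = stretch_last (r * s) y.
Proof.
by apply/rowP => i; rewrite !mxE; case: (i == ord_max); rewrite ?mulrA.
Qed.

Lemma stretch_last1 : stretch_last 1 =1 id.
Proof.
by move=> y; apply/rowP => i; rewrite !mxE; case: (i == ord_max); rewrite ?mul1r.
Qed.

Lemma preimage_stretch_last (r : R) (K : set 'rV[R]_n.+1) : r != 0 ->
  stretch_last r @^-1` K = stretch_last r^-1 @` K.
Proof.
move=> r0; apply/seteqP; split => y /=.
  move=> Ky; exists (stretch_last r y) => //.
  by rewrite stretch_lastM mulVf ?stretch_last1.
by move=> [z Kz <-]; rewrite stretch_lastM mulfV ?stretch_last1.
Qed.

Lemma continuous_stretch_last (r : R) : continuous (stretch_last r).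
Proof.
move=> u A /nbhs_ballP[e /= e0 eA].
have r1_gt0 : 0 < 1 + `|r| by rewrite ltr_pwDl.
apply/nbhs_ballP; exists (e / (1 + `|r|)) => /=; first by rewrite divr_gt0.
move=> v [_ uv]; apply: eA; split => // i j.
have := uv i j; rewrite /ball /= !mxE (ord1 i) ltr_pdivlMr // => uv_ij.
apply: le_lt_trans uv_ij; case: ifP => _; last by rewrite ler_peMr // lerDl.
by rewrite -mulrBr normrM mulrC ler_wpM2l // lerDr.
Qed.

Lemma compact_preimage_stretch_last (r : R) (K : set 'rV[R]_n.+1) : r != 0 ->
  compact K -> compact (stretch_last r @^-1` K).
Proof.
move=> r0 cK; rewrite preimage_stretch_last //.
apply: continuous_compact cK.
exact: continuous_subspaceT (@continuous_stretch_last _).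
Qed.

Lemma interior_preimage_stretch_last_neq0 (r : R) (K : set 'rV[R]_n.+1) :
  r != 0 -> interior K !=set0 -> interior (stretch_last r @^-1` K) !=set0.
Proof.
move=> r0 [y Ky]; exists (stretch_last r^-1 y).
have := @continuous_stretch_last r (stretch_last r^-1 y).
by rewrite /continuous_at stretch_lastM mulfV // stretch_last1 => /(_ K Ky).
Qed.

End StretchLast.

Section StretchVolume.
Context {R : realType}.

Lemma leb_vol_preimage_stretch_last (n : nat) (r : R) (K : set 'rV[R]_n.+1) :
  0 < r -> leb_vol (stretch_last r @^-1` K) = (r^-1%:E * leb_vol K)%E.
Proof.
case: n K => [|n] K r0; rewrite /leb_vol /=.
  rewrite -lebesgue_measure_preimage_mulr //; congr lebesgue_measure.
  apply/funext => s /=; congr K; apply/rowP => i.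
  by rewrite !mxE (ord1 i).
case: (lebspace R n) => d T mu f /=; set G := (fun tx : T * R => _).
have stretchG t s : stretch_last r (G (t, s)) = G (t, r * s).
  apply/rowP => i; rewrite !mxE.
  case: (unliftP ord_max i) => [j ->|->]; last by rewrite eqxx.
  by rewrite eq_sym (negbTE (neq_lift _ _)).
have xsection_stretch t : xsection (G @^-1` (stretch_last r @^-1` K)) t =
    (fun s : R => (r * s)%R) @^-1` xsection (G @^-1` K) t.
  by apply/funext => s; rewrite /xsection /= !in_setE /= stretchG.
rewrite /product_measure1 /= -ge0_integralZl_gt0 ?invr_gt0 //.
apply: eq_integral => t _.
by rewrite xsection_stretch lebesgue_measure_preimage_mulr.
Qed.

End StretchVolume.

Section AlgebraicStretch.
Context {R : realType}.

Lemma is_alg_algebraicOver (x : R) : is_alg x <-> algebraicOver ratr x.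
Proof. by split=> [[q [q0 qx]]|[q q0 qx]]; exists q. Qed.

Lemma is_algV (x : R) : is_alg x -> is_alg x^-1.
Proof. by move/is_alg_algebraicOver/algebraic_inv/is_alg_algebraicOver. Qed.

Lemma is_alg_norm (x : R) : is_alg x -> is_alg `|x|.
Proof.
move=> /is_alg_algebraicOver x_alg; apply/is_alg_algebraicOver.
have [x_ge0|x_lt0] := leP 0 x; first by rewrite ger0_norm.
by rewrite ltr0_norm //; apply: algebraic_opp.
Qed.

Lemma alg_polyfun_stretch_last n (r : R) (f : 'rV[R]_n.+1 -> R) :
  is_alg r -> alg_polyfun f -> alg_polyfun (f \o stretch_last r).
Proof.
move=> r_alg; elim=> {f} [c c_alg|i|f g _ IHf _ IHg|f g _ IHf _ IHg].
- exact: apf_const.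
- have [->|i_neq] := eqVneq i ord_max.
    have -> : (fun y : 'rV[R]_n.+1 => y 0 ord_max) \o stretch_last r =
              (fun y => r * y 0 ord_max).
      by apply/funext => y; rewrite /= mxE eqxx.
    exact: apf_mul (apf_const _ r_alg) (apf_coord _ _).
  have -> : (fun y : 'rV[R]_n.+1 => y 0 i) \o stretch_last r = (fun y => y 0 i).
    by apply/funext => y; rewrite /= mxE (negbTE i_neq).
  exact: apf_coord.
- exact: apf_add IHf IHg.
- exact: apf_mul IHf IHg.
Qed.

Lemma semialg_preimage_stretch_last n (r : R) (K : set 'rV[R]_n.+1) :
  is_alg r -> semialg K -> semialg (stretch_last r @^-1` K).
Proof.
move=> r_alg; elim=> {K} [f f_alg|g g_alg|A B _ IHA _ IHB|A B _ IHA _ IHB].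
- exact: sa_eq (alg_polyfun_stretch_last r_alg f_alg).
- exact: sa_gt (alg_polyfun_stretch_last r_alg g_alg).
- exact: sa_union.
- exact: sa_inter.
Qed.

End AlgebraicStretch.

Section VolumeRepresentation.
Context {R : realType}.

Lemma vol_repr_norm (a b : R) k : `|a| = `|b| -> vol_repr a k -> vol_repr b k.
Proof. by case: k => [//|k] /= ab [K [SK cK aK]]; exists K; rewrite -ab. Qed.

Lemma vol_repr_mull_pos (c a : R) k : is_alg c -> 0 < c ->
  vol_repr a k -> vol_repr (c * a) k.
Proof.
case: k => [//|k] /= c_alg c_gt0 [K [[saK intK] cK aK]].
have c1_neq0 : c^-1 != 0 by rewrite invr_neq0 // gt_eqF.
exists (stretch_last c^-1 @^-1` K); split.
- split; first exact/semialg_preimage_stretch_last/saK/is_algV.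
  exact: interior_preimage_stretch_last_neq0.
- exact: compact_preimage_stretch_last.
- rewrite leb_vol_preimage_stretch_last ?invr_gt0 // invrK -aK.
  by rewrite normrM gtr0_norm.
Qed.

Lemma vol_repr_mull (x a : R) k : is_alg x -> x != 0 ->
  vol_repr (x * a) k <-> vol_repr a k.
Proof.
move=> x_alg x_neq0; have absx_gt0 : 0 < `|x| by rewrite normr_gt0.
have absx_alg := is_alg_norm x_alg.
split=> [|a_k].
- have absx1_gt0 : 0 < `|x|^-1 by rewrite invr_gt0.
  move/(vol_repr_mull_pos (is_algV absx_alg) absx1_gt0).
  apply: vol_repr_norm.
  by rewrite !normrM normfV normr_id mulrA mulVf ?gt_eqF // mul1r.
- apply: vol_repr_norm (vol_repr_mull_pos absx_alg absx_gt0 a_k).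
  by rewrite !normrM normr_id.
Qed.

Lemma eq_deg (a b : R) : (a == 0) = (b == 0) ->
  (forall k, vol_repr a k <-> vol_repr b k) -> deg a = deg b.
Proof.
rewrite /deg => -> ab; case: (b == 0) => //; congr xget.
apply/funext => k; apply/propext.
by split=> -[k_ok k_min]; split=> [|k' /ab]; by [apply/ab | apply: k_min].
Qed.

End VolumeRepresentation.

Theorem mainTheorem7 (R : realType) (x p : R) :
  is_alg x -> x != 0 -> is_period p -> ~ is_alg p ->
  deg (x * p) = deg p.
Proof.
move=> x_alg x_neq0 _ p_not_alg.
have p_neq0 : p != 0.
  apply/eqP => p0; apply: p_not_alg; rewrite p0.
  by apply/is_alg_algebraicOver; apply: algebraic0.
apply: eq_deg => [|k]; last exact: vol_repr_mull.
by rewrite mulf_eq0 (negbTE x_neq0) (negbTE p_neq0).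
Qed.
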